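(* Let $1\leq i<j\leq n$ and let $\sigma\in\mathfrak{S}_n$ be such that the letter $i$ is immediately followed by the letter $j$ in the word $\sigma(1)\cdots\sigma(n)$. Let $\tau=(ij)\circ\sigma$, i.e. the permutation whose word is obtained by exchanging these two consecutive letters $i,j$ (other letters unchanged). Then $E(\Psi_n(\tau))=E(\Psi_n(\sigma))\setminus\{(i,j)\}$.
   Context: For $\sigma\in\mathfrak{S}_n$, $\Psi_n(\sigma)$ is the double poset on $\{1,\ldots,n\}$ with $a\leq_h b$ iff ($a\leq b$ and $\sigma^{-1}(a)\leq\sigma^{-1}(b)$), and $a\leq_r b$ iff ($a\leq b$ and $\sigma^{-1}(a)\geq\sigma^{-1}(b)$). For a double poset $P$, $E(P)=\{(a,b)\in P^2\mid a<_h b\}$. *)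

From mathcomp Require Import all_boot all_fingroup.
Set Implicit Arguments. Unset Strict Implicit. Unset Printing Implicit Defensive.

(* Letters {1..n} are modelled by 'I_n = {0..n-1} (shift by one); the word of
   sigma is sigma(0) ... sigma(n-1), i.e. position p carries letter sigma p. *)

Definition le_h n (s : 'S_n) (a b : 'I_n) : bool :=
  (a <= b) && ((s^-1)%g a <= (s^-1)%g b).
Definition le_r n (s : 'S_n) (a b : 'I_n) : bool :=
  (a <= b) && ((s^-1)%g b <= (s^-1)%g a).
Definition lt_h n (s : 'S_n) (a b : 'I_n) : bool := (a != b) && le_h s a b.

Definition Eset n (s : 'S_n) : {set 'I_n * 'I_n} :=
  [set ab | lt_h s ab.1 ab.2].

From mathcomp Require Import all_boot all_fingroup.
From mathcomp Require Import zify.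

(* On positions, tau^-1 is sigma^-1 followed by the swap of the adjacent
   positions p, p+1 of i and j.  Such a swap preserves the order of every pair of
   positions except (p, p+1), so the only pair of letters whose comparison in
   the position order changes is (i, j). *)

Lemma leq_tperm_succ n (p q x y : 'I_n) :
  q = p.+1 :> nat -> (x, y) != (p, q) -> (x, y) != (q, p) ->
  (tperm p q x <= tperm p q y) = (x <= y).
Proof.
move=> qE; rewrite !xpair_eqE.
case: tpermP => [->|->|/eqP + /eqP]; case: tpermP => [->|->|/eqP + /eqP];
  rewrite -?(inj_eq val_inj) /=; lia.
Qed.

Lemma invMg_tperm n (s : 'S_n) (i j : 'I_n) :
  ((s * tperm i j)^-1 = s^-1 * tperm (s^-1 i) (s^-1 j))%g.
Proof. by rewrite invMg tpermV -tpermJ /conjg invgK mulgA mulVg mul1g. Qed.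

Lemma eq_pair_permV n (s : 'S_n) (a b x y : 'I_n) :
  ((s^-1 a, s^-1 b) == (x, y))%g = ((a, b) == (s x, s y)).
Proof.
by rewrite !xpair_eqE -(inj_eq (@perm_inj _ s) (s^-1 a))%g
  -(inj_eq (@perm_inj _ s) (s^-1 b))%g !permKV.
Qed.

Theorem lemma12 (n : nat) (i j : 'I_n) (sigma : 'S_n) :
  i < j ->
  (exists p q : 'I_n, [/\ q = p.+1 :> nat, sigma p = i & sigma q = j]) ->
  Eset (sigma * tperm i j)%g = Eset sigma :\ (i, j).
Proof.
move=> ltij [p [q [qE Ei Ej]]]; subst i j.
apply/setP => -[a b]; rewrite !inE /lt_h /le_h /= invMg_tperm !permK !permM.
have [[-> ->]|ne_ij] := eqVneq (a, b) (sigma p, sigma q).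
  by rewrite !permK tpermL tpermR (leqNgt q) qE ltnSn !andbF.
have [[-> ->]|ne_ji] := eqVneq (a, b) (sigma q, sigma p).
  by rewrite leqNgt ltij !andbF.
by rewrite leq_tperm_succ // eq_pair_permV.
Qed.
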